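(* Let $A\in\mathbb{R}^{n\times n}$ be symmetric, let $\mathcal{D}$ be a distribution over matrices $S\in\mathbb{R}^{n\times\tau}$, and let $X_0 = AWA$ for some $W\in\mathbb{R}^{n\times n}$. Define iterates $$X_{k+1} = X_k + AS_k(S_k^\top A^2 S_k)^\dagger S_k^\top (A - A X_k A) S_k (S_k^\top A^2 S_k)^\dagger S_k^\top A,\qquad k\ge0,$$ with $S_0,S_1,\dots$ drawn independently from $\mathcal{D}$. For $S\sim\mathcal{D}$ let $Z\eqdef AS(S^\top A^2S)^\dagger S^\top A$, and let $$\rho \eqdef 1-\inf\Big\{\langle \mathbb{E}[ZRZ],R\rangle \;:\; R = AQA,\ Q\in\mathbb{R}^{n\times n},\ \|R\|^2=1\Big\}.$$ Then $\mathbb{E}\big[\|X_k - A^\dagger\|^2\big]\le \rho^k\,\|X_0-A^\dagger\|^2$.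
   Context: $A^\dagger$ is the Moore–Penrose pseudoinverse; $\langle X,Y\rangle=\mathrm{Tr}(X^\top Y)$ and $\|\cdot\|$ is the Frobenius norm. *)

From HB Require Import structures.
From mathcomp Require Import all_boot all_order all_algebra.
From mathcomp Require Import all_classical all_reals all_analysis.
Set Implicit Arguments. Unset Strict Implicit. Unset Printing Implicit Defensive.
Import Order.TTheory GRing.Theory Num.Theory.
Import numFieldNormedType.Exports.
Local Open Scope classical_set_scope.
Local Open Scope ring_scope.

Section Defs.
Variable R : realType.

Definition penrose (m n : nat) (A : 'M[R]_(m, n)) (B : 'M[R]_(n, m)) : Prop :=
  [/\ A *m B *m A = A, B *m A *m B = B,
      (A *m B)^T = A *m B & (B *m A)^T = B *m A].

Definition mpinv (m n : nat) (A : 'M[R]_(m, n)) : 'M[R]_(n, m) :=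
  xget 0 (penrose A).

Definition frob (m n : nat) (X Y : 'M[R]_(m, n)) : R := \tr (X^T *m Y).
Definition frob2 (m n : nat) (X : 'M[R]_(m, n)) : R := frob X X.

Definition Zof (n tau : nat) (A : 'M[R]_n) (S : 'M[R]_(n, tau)) : 'M[R]_n :=
  A *m S *m mpinv (S^T *m (A *m A) *m S) *m S^T *m A.

Definition step (n tau : nat) (A : 'M[R]_n) (S : 'M[R]_(n, tau)) (X : 'M[R]_n)
  : 'M[R]_n :=
  let M := mpinv (S^T *m (A *m A) *m S) in
  X + A *m S *m M *m S^T *m (A - A *m X *m A) *m S *m M *m S^T *m A.

Fixpoint sketch_iter (n tau : nat) (A : 'M[R]_n) (X : 'M[R]_n)
  (Ss : seq 'M[R]_(n, tau)) : 'M[R]_n :=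
  match Ss with
  | [::] => X
  | S0 :: Ss' => sketch_iter A (step A S0 X) Ss'
  end.

Definition mexp d (T : measurableType d) (P : probability T R) (m n : nat)
  (F : T -> 'M[R]_(m, n)) : 'M[R]_(m, n) :=
  \matrix_(i, j) (\int[P]_(w in setT) F w i j).

(* Expectation, w.r.t. k independent draws w_0,...,w_{k-1} ~ P, of a
   nonnegative extended-real function of the list [w_0; ...; w_{k-1}]
   (iterated integration = integration against the k-fold product law). *)
Fixpoint Eiid d (T : measurableType d) (P : probability T R) (k : nat)
  (f : seq T -> \bar R) : \bar R :=
  match k with
  | 0 => f [::]
  | k'.+1 => (\int[P]_w Eiid P k' (fun s => f (w :: s)))%E
  end.

Definition rho d (T : measurableType d) (P : probability T R) (n tau : nat)
  (A : 'M[R]_n) (Sk : T -> 'M[R]_(n, tau)) : R :=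
  1 - inf [set x : R | exists Q : 'M[R]_n,
             frob2 (A *m Q *m A) = 1 /\
             x = frob (mexp P (fun w => Zof A (Sk w) *m (A *m Q *m A) *m Zof A (Sk w)))
                      (A *m Q *m A)].

End Defs.

(* Z = A S (S^T A^2 S)^+ S^T A is an orthogonal projection, and A A^+ A = A
   turns the update into E' = E - Z E Z for the error E = X - A^+.  Hence
   ||E'||^2 = ||E||^2 - <Z E Z, E>.  Since A is symmetric, A^+ = A Q A for some
   Q, and the update maps A Q A to A Q' A, so every error is of the form A Q A;
   by homogeneity the definition of rho gives E[<Z E Z, E>] >= (1 - rho) ||E||^2
   for such E.  Integrating out the first sketch and inducting on k yields the
   bound.  All integrands are bounded, since <Z E Z, E> lies in [0, ||E||^2]. *)

From HB Require Import structures.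
From mathcomp Require Import all_boot all_order all_algebra.
From mathcomp Require Import all_classical all_reals all_analysis.
From mathcomp Require Import measurable_realfun lra.
Import Order.TTheory GRing.Theory Num.Theory.
Import numFieldNormedType.Exports.
Local Open Scope classical_set_scope.
Local Open Scope ring_scope.
Set Implicit Arguments.
Unset Strict Implicit.
Unset Printing Implicit Defensive.

Section Frobenius.
Variable R : realType.

Lemma frobE m n (X Y : 'M[R]_(m, n)) : frob X Y = \sum_i \sum_j X i j * Y i j.
Proof.
rewrite /frob /mxtrace; under eq_bigr do rewrite mxE.
rewrite exchange_big; apply: eq_bigr => i _; apply: eq_bigr => j _.
by rewrite mxE.
Qed.

Lemma frobC m n (X Y : 'M[R]_(m, n)) : frob X Y = frob Y X.
Proof. by rewrite /frob -mxtrace_tr trmx_mul trmxK. Qed.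

Lemma frobZ m n (a b : R) (X Y : 'M[R]_(m, n)) :
  frob (a *: X) (b *: Y) = a * b * frob X Y.
Proof.
by rewrite /frob [(a *: X)^T]linearZ /= -scalemxAl -scalemxAr !mxtraceZ mulrA.
Qed.

Lemma frob2B m n (X Y : 'M[R]_(m, n)) :
  frob2 (X - Y) = frob2 X - frob X Y - frob Y X + frob2 Y.
Proof.
rewrite /frob2 /frob [(X - Y)^T]linearB /= mulmxBl !mulmxBr !linearB /=.
lra.
Qed.

Lemma sqr_mxE_le_frob2 m n (X : 'M[R]_(m, n)) i j : X i j ^+ 2 <= frob2 X.
Proof.
rewrite /frob2 frobE (bigD1 i) //= (bigD1 j) //= -expr2 -addrA lerDl.
by apply: addr_ge0; apply: sumr_ge0 => k _; [|apply: sumr_ge0 => l _];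
  rewrite -expr2 sqr_ge0.
Qed.

Lemma frob2_ge0 m n (X : 'M[R]_(m, n)) : 0 <= frob2 X.
Proof.
rewrite /frob2 frobE; apply: sumr_ge0 => i _; apply: sumr_ge0 => j _.
by rewrite -expr2 sqr_ge0.
Qed.

Lemma frob2_eq0 m n (X : 'M[R]_(m, n)) : frob2 X = 0 -> X = 0.
Proof.
move=> X0; apply/matrixP => i j; rewrite mxE; apply/eqP.
by rewrite -sqrf_eq0 eq_le sqr_ge0 andbT -X0 sqr_mxE_le_frob2.
Qed.

End Frobenius.

Section Pseudoinverse.
Variable R : realType.

Lemma gram_unitmx r m (K : 'M[R]_(r, m)) : row_free K -> K *m K^T \in unitmx.
Proof.
move=> freeK; rewrite -row_free_unit -kermx_eq0.
set N := kermx (K *m K^T).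
have NK0 : N *m K = 0.
  apply: trmx_inj; rewrite trmx0; apply: frob2_eq0.
  rewrite /frob2 /frob trmxK trmx_mul !mulmxA -(mulmxA N) mulmx_ker.
  by rewrite mul0mx mxtrace0.
by rewrite -(mulmx_free_eq0 _ freeK) NK0.
Qed.

Lemma penrose_full_rank_factor m n r (C : 'M[R]_(m, r)) (F : 'M[R]_(r, n)) :
  C^T *m C \in unitmx -> F *m F^T \in unitmx ->
  penrose (C *m F) (F^T *m invmx (F *m F^T) *m invmx (C^T *m C) *m C^T).
Proof.
move=> uC uF.
set U1 := invmx (F *m F^T); set U2 := invmx (C^T *m C).
have U1_sym : U1^T = U1 by rewrite /U1 trmx_inv trmx_mul trmxK.
have U2_sym : U2^T = U2 by rewrite /U2 trmx_inv trmx_mul trmxK.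
have FU1 p (Y : 'M[R]_(r, p)) : F *m (F^T *m (U1 *m Y)) = Y.
  by rewrite !mulmxA mulmxV // mul1mx.
have CU2 p (Y : 'M[R]_(r, p)) : C^T *m (C *m (U2 *m Y)) = Y.
  by rewrite !mulmxA mulmxV // mul1mx.
have U2C p (Y : 'M[R]_(r, p)) : U2 *m (C^T *m (C *m Y)) = Y.
  by rewrite (mulmxA C^T) mulmxA mulVmx // mul1mx.
have AB : C *m F *m (F^T *m U1 *m U2 *m C^T) = C *m U2 *m C^T.
  by rewrite -!mulmxA FU1.
have BA : F^T *m U1 *m U2 *m C^T *m (C *m F) = F^T *m U1 *m F.
  by rewrite -!mulmxA U2C.
split.
- by rewrite AB -!mulmxA U2C.
- by rewrite BA -!mulmxA FU1.
- by rewrite AB !trmx_mul trmxK U2_sym mulmxA.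
- by rewrite BA !trmx_mul trmxK U1_sym mulmxA.
Qed.

Lemma penrose_exists m n (A : 'M[R]_(m, n)) : exists B, penrose A B.
Proof.
have uF := gram_unitmx (row_base_free A).
have uC : (col_base A)^T *m (col_base A) \in unitmx.
  rewrite -[X in _ *m X]trmxK gram_unitmx // /row_free mxrank_tr.
  exact: col_base_full.
by rewrite -(mulmx_base A); eexists; exact: penrose_full_rank_factor.
Qed.

Lemma mpinvP m n (A : 'M[R]_(m, n)) : penrose A (mpinv A).
Proof. by apply: xgetPex; exact: penrose_exists. Qed.

Lemma penrose_sym_range n (A Ad : 'M[R]_n) : A^T = A -> penrose A Ad ->
  Ad = A *m (Ad^T *m Ad *m Ad^T) *m A.
Proof.
move=> A_sym [_ AdAAd AAd_sym AdA_sym].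
have AdA : Ad *m A = A *m Ad^T by rewrite -AdA_sym trmx_mul A_sym.
have AAd : A *m Ad = Ad^T *m A by rewrite -AAd_sym trmx_mul A_sym.
by rewrite !mulmxA -AdA AdAAd -mulmxA -AAd mulmxA AdAAd.
Qed.

End Pseudoinverse.

Section OrthogonalProjection.
Variables (R : realType) (n : nat) (Z : 'M[R]_n).
Hypotheses (Z_sym : Z^T = Z) (Z_idem : Z *m Z = Z).

Lemma frob2_proj_sandwich (E : 'M[R]_n) :
  frob2 (Z *m E *m Z) = frob (Z *m E *m Z) E.
Proof.
rewrite /frob2 /frob !trmx_mul Z_sym !mulmxA -[Z *m E^T *m Z *m Z]mulmxA Z_idem.
by rewrite [LHS]mxtrace_mulC !mulmxA Z_idem.
Qed.

Lemma frob_proj_sandwich_ge0 (E : 'M[R]_n) : 0 <= frob (Z *m E *m Z) E.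
Proof. by rewrite -frob2_proj_sandwich frob2_ge0. Qed.

Lemma frob2_sub_proj_sandwich (E : 'M[R]_n) :
  frob2 (E - Z *m E *m Z) = frob2 E - frob (Z *m E *m Z) E.
Proof. rewrite frob2B (frobC E) frob2_proj_sandwich; lra. Qed.

Lemma frob_proj_sandwich_le (E : 'M[R]_n) : frob (Z *m E *m Z) E <= frob2 E.
Proof. by rewrite -subr_ge0 -frob2_sub_proj_sandwich frob2_ge0. Qed.

End OrthogonalProjection.

Lemma gram_ginv_cancel (R : realType) m t (B : 'M[R]_(m, t)) (M : 'M[R]_t) :
  B^T *m B *m M *m (B^T *m B) = B^T *m B -> B *m M *m (B^T *m B) = B.
Proof.
move=> M_ginv; apply/eqP; rewrite -subr_eq0; apply/eqP.
set D := B *m M *m (B^T *m B) - B.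
have DE : D = B *m (M *m (B^T *m B) - 1%:M).
  by rewrite /D mulmxBr mulmx1 !mulmxA.
have BtD : B^T *m D = 0.
  rewrite /D mulmxBr !mulmxA.
  by move: M_ginv; rewrite !mulmxA => ->; rewrite subrr.
apply: frob2_eq0.
by rewrite /frob2 /frob {1}DE trmx_mul -mulmxA BtD mulmx0 mxtrace0.
Qed.

Section GramProjection.
Variables (R : realType) (m t : nat) (B : 'M[R]_(m, t)) (M : 'M[R]_t).
Hypothesis M_ginv : B^T *m B *m M *m (B^T *m B) = B^T *m B.

Lemma gram_ginv_proj_sym : (B *m M *m B^T)^T = B *m M *m B^T.
Proof.
have Mt_ginv : B^T *m B *m M^T *m (B^T *m B) = B^T *m B.
  by have := congr1 trmx M_ginv; rewrite !trmx_mul trmxK !mulmxA.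
have BtE : B^T = B^T *m B *m M *m B^T.
  have := congr1 trmx (gram_ginv_cancel Mt_ginv).
  by rewrite !trmx_mul !trmxK !mulmxA.
rewrite !trmx_mul trmxK {1}BtE !mulmxA.
by move: (gram_ginv_cancel Mt_ginv); rewrite !mulmxA => ->.
Qed.

Lemma gram_ginv_proj_idem :
  B *m M *m B^T *m (B *m M *m B^T) = B *m M *m B^T.
Proof. by move: (gram_ginv_cancel M_ginv); rewrite !mulmxA => ->. Qed.

End GramProjection.

Section SketchStep.
Variables (R : realType) (n tau : nat) (A : 'M[R]_n) (S : 'M[R]_(n, tau)).

Lemma step_subr (Ad X : 'M[R]_n) : A *m Ad *m A = A ->
  step A S X - Ad = (X - Ad) - Zof A S *m (X - Ad) *m Zof A S.
Proof.
move=> AAdA.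
have residualE : A - A *m X *m A = - (A *m (X - Ad) *m A).
  by rewrite mulmxBr mulmxBl AAdA opprB.
by rewrite /step /Zof residualE !(mulmxN, mulNmx) !mulmxA addrAC.
Qed.

Lemma step_range (Q : 'M[R]_n) :
  exists Q', step A S (A *m Q *m A) = A *m Q' *m A.
Proof.
pose M := mpinv (S^T *m (A *m A) *m S).
exists (Q + S *m M *m S^T *m (A - A *m (A *m Q *m A) *m A) *m S *m M *m S^T).
by rewrite /step /M [in RHS]mulmxDr [in RHS]mulmxDl !mulmxA.
Qed.

Hypothesis A_sym : A^T = A.

Lemma Zof_gram :
  Zof A S = A *m S *m mpinv ((A *m S)^T *m (A *m S)) *m (A *m S)^T.
Proof. by rewrite /Zof !trmx_mul A_sym !mulmxA. Qed.

Lemma Zof_sym : (Zof A S)^T = Zof A S.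
Proof.
have [ginv _ _ _] := mpinvP ((A *m S)^T *m (A *m S)).
by rewrite Zof_gram gram_ginv_proj_sym.
Qed.

Lemma Zof_idem : Zof A S *m Zof A S = Zof A S.
Proof.
have [ginv _ _ _] := mpinvP ((A *m S)^T *m (A *m S)).
by rewrite Zof_gram gram_ginv_proj_idem.
Qed.

End SketchStep.

Section Integrals.
Context d (T : measurableType d) (R : realType).

Section Measure.
Variable mu : {measure set T -> \bar R}.

(* Unlike [ge0_le_integral], this needs no measurability, which is not known
   for the iterated integrands of [Eiid]. *)
Lemma le_ge0_integral (f g : T -> \bar R) :
  (forall x, 0 <= f x)%E -> (forall x, f x <= g x)%E ->
  (\int[mu]_x f x <= \int[mu]_x g x)%E.
Proof.
move=> f0 fg; have g0 x : (0 <= g x)%E := le_trans (f0 x) (fg x).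
rewrite !ge0_integralE //; apply: ereal_sup_le => _ [h hf <-].
by exists h => //= x; apply: le_trans (hf x) _; rewrite /patch /=; case: ifP.
Qed.

Lemma Rintegral_sum I (s : seq I) (F : I -> T -> R) :
  (forall i, mu.-integrable setT (EFin \o F i)) ->
  \int[mu]_x (\sum_(i <- s) F i x) = \sum_(i <- s) \int[mu]_x F i x.
Proof.
move=> intF; rewrite /Rintegral sum_fine => [|i _]; last first.
  by apply: integrable_fin_num => //; exact: intF.
by congr fine; under eq_integral do rewrite -sumEFin; exact: integral_sum.
Qed.

End Measure.

Variable P : probability T R.

Lemma bounded_integrable (f : T -> R) (M : R) : measurable_fun setT f ->
  (forall x, `|f x| <= M) -> P.-integrable setT (EFin \o f).
Proof.
have finP : (P setT < +oo)%E by rewrite probability_setT ltry.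
move=> mf fM; apply: measurable_bounded_integrable => //.
rewrite /bounded_near; near=> M' => x _ /=; apply: le_trans (fM x) _.
by near: M'; apply: nbhs_pinfty_ge; exact: num_real.
Unshelve. all: by end_near.
Qed.

Lemma Rintegral_cst_probability (c : R) : \int[P]_x c = c.
Proof.
rewrite Rintegral_cst // -[RHS]mulr1; congr (_ * _).
exact: (f_equal fine (probability_setT P)).
Qed.

Lemma frob_mexp m n (F : T -> 'M[R]_(m, n)) (E : 'M[R]_(m, n)) :
  (forall i j, P.-integrable setT (EFin \o fun w => F w i j)) ->
  frob (mexp P F) E = \int[P]_w frob (F w) E.
Proof.
move=> intF; under eq_Rintegral do rewrite frobE pair_bigA /=.
rewrite Rintegral_sum => [|p]; last first.
  exact: eq_integrable (integrableZr _ (E p.1 p.2) (intF p.1 p.2)).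
rewrite frobE pair_bigA; apply: eq_bigr => p _.
by rewrite mxE RintegralZr.
Qed.

Lemma Eiid_ge0 k (f : seq T -> \bar R) :
  (forall s, 0 <= f s)%E -> (0 <= Eiid P k f)%E.
Proof.
elim: k f => [|k IH] f f0 /=; first exact: f0.
by apply: integral_ge0 => w _; apply: IH => s; exact: f0.
Qed.

End Integrals.

Section RandomSketch.
Variables (R : realType) (n tau : nat) (A : 'M[R]_n) (d : measure_display)
  (T : measurableType d) (P : probability T R) (S : T -> 'M[R]_(n, tau)).
Hypotheses (A_sym : A^T = A)
  (measurable_Z : forall i j, measurable_fun setT (fun w => Zof A (S w) i j)).

Local Notation Z w := (Zof A (S w)).

Let Z_sym w : (Z w)^T = Z w := Zof_sym (S w) A_sym.
Let Z_idem w : Z w *m Z w = Z w := Zof_idem (S w) A_sym.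

Definition sketch_gain (E : 'M[R]_n) (w : T) : R := frob (Z w *m E *m Z w) E.

Lemma sketch_gain_ge0 E w : 0 <= sketch_gain E w.
Proof. exact: frob_proj_sandwich_ge0 (Z_sym w) (Z_idem w) E. Qed.

Lemma sketch_gain_le E w : sketch_gain E w <= frob2 E.
Proof. exact: frob_proj_sandwich_le (Z_sym w) (Z_idem w) E. Qed.

Lemma measurable_sandwich_mxE (E : 'M[R]_n) i j :
  measurable_fun setT (fun w => (Z w *m E *m Z w) i j).
Proof.
have -> : (fun w => (Z w *m E *m Z w) i j) =
    (fun w => \sum_k (\sum_l Z w i l * E l k) * Z w k j).
  by apply: funext => w; rewrite mxE; apply: eq_bigr => k _; rewrite mxE.
apply: measurable_sum => k; apply: measurable_funM => //.
by apply: measurable_sum => l; apply: measurable_funM.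
Qed.

Lemma integrable_sandwich_mxE (E : 'M[R]_n) i j :
  P.-integrable setT (EFin \o fun w => (Z w *m E *m Z w) i j).
Proof.
apply: (bounded_integrable P (M := 1 + frob2 E)) => [|w].
  exact: measurable_sandwich_mxE.
set x := (Z w *m E *m Z w) i j.
have x2_le : x ^+ 2 <= frob2 E.
  apply: le_trans (sqr_mxE_le_frob2 _ i j) _.
  by rewrite frob2_proj_sandwich //; exact: sketch_gain_le.
have := normr_ge0 x; have := real_normK (num_real x); nra.
Qed.

Lemma measurable_sketch_gain E : measurable_fun setT (sketch_gain E).
Proof.
rewrite /sketch_gain; under eq_fun do rewrite frobE.
apply: measurable_sum => i; apply: measurable_sum => j.
by apply: measurable_funM => //; exact: measurable_sandwich_mxE.
Qed.

Lemma integrable_sketch_gain E : P.-integrable setT (EFin \o sketch_gain E).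
Proof.
apply: (bounded_integrable P (M := frob2 E)) => [|w].
  exact: measurable_sketch_gain.
by rewrite ger0_norm ?sketch_gain_ge0 ?sketch_gain_le.
Qed.

Lemma frob_mexp_sandwich E :
  frob (mexp P (fun w => Z w *m E *m Z w)) E = \int[P]_w sketch_gain E w.
Proof. by apply: frob_mexp => i j; exact: integrable_sandwich_mxE. Qed.

Lemma expected_sketch_gain_ge0 E : 0 <= \int[P]_w sketch_gain E w.
Proof. by apply: Rintegral_ge0 => w _; exact: sketch_gain_ge0. Qed.

Lemma expected_sketch_gain_le E : \int[P]_w sketch_gain E w <= frob2 E.
Proof.
rewrite -[leRHS](Rintegral_cst_probability P).
apply: le_Rintegral => //.
- exact: integrable_sketch_gain.
- by apply: (bounded_integrable P (M := `|frob2 E|)).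
- by move=> w _; exact: sketch_gain_le.
Qed.

Let gain_set := [set x : R | exists Q : 'M[R]_n, frob2 (A *m Q *m A) = 1 /\
  x = frob (mexp P (fun w => Z w *m (A *m Q *m A) *m Z w)) (A *m Q *m A)].

Let gain_set_lbound : lbound gain_set 0.
Proof.
by move=> _ [Q [_ ->]]; rewrite frob_mexp_sandwich expected_sketch_gain_ge0.
Qed.

Lemma rho_ge0 : 0 <= rho P A S.
Proof.
rewrite /rho -/gain_set subr_ge0.
have [[x gain_x]|no_gain] := pselect (exists x, gain_set x); last first.
  suff -> : gain_set = set0 by rewrite inf0 ler01.
  by apply/seteqP; split => x // gain_x; apply: no_gain; exists x.
apply: le_trans (ge_inf (ex_intro _ 0 gain_set_lbound) gain_x) _.
case: gain_x => Q [normQ ->].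
by rewrite frob_mexp_sandwich -normQ expected_sketch_gain_le.
Qed.

Lemma expected_sketch_gain_ge Q :
  (1 - rho P A S) * frob2 (A *m Q *m A)
  <= \int[P]_w sketch_gain (A *m Q *m A) w.
Proof.
rewrite /rho -/gain_set opprB addrC subrK; set E := A *m Q *m A.
have := frob2_ge0 E; rewrite le_eqVlt => /predU1P [<-|E_gt0].
  by rewrite mulr0 expected_sketch_gain_ge0.
pose t := (Num.sqrt (frob2 E))^-1.
have t2E : t ^+ 2 * frob2 E = 1.
  by rewrite exprVn sqr_sqrtr ?ltW // mulVf // gt_eqF.
have gainZ w : sketch_gain (t *: E) w = t ^+ 2 * sketch_gain E w.
  by rewrite /sketch_gain -scalemxAr -scalemxAl frobZ expr2.
have scaled_gain : gain_set (t ^+ 2 * \int[P]_w sketch_gain E w).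
  exists (t *: Q); rewrite -scalemxAr -scalemxAl -/E; split.
    by rewrite /frob2 frobZ -expr2.
  rewrite frob_mexp_sandwich -RintegralZl //; last first.
    exact: integrable_sketch_gain.
  by apply: eq_Rintegral => w _; rewrite gainZ.
have := ge_inf (ex_intro _ 0 gain_set_lbound) scaled_gain.
move/(ler_wpM2r (ltW E_gt0)).
by rewrite mulrAC t2E mul1r.
Qed.

Lemma expected_step_error_le (c : R) (Q : 'M[R]_n) : 0 <= c ->
  (\int[P]_w (c * frob2 (step A (S w) (A *m Q *m A) - mpinv A))%:E
   <= (c * (rho P A S * frob2 (A *m Q *m A - mpinv A)))%:E)%E.
Proof.
move=> c_ge0; have [AAdA _ _ _] := mpinvP A.
pose Q0 := (mpinv A)^T *m mpinv A *m (mpinv A)^T.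
set E := A *m Q *m A - mpinv A.
have E_range : E = A *m (Q - Q0) *m A.
  by rewrite mulmxBr mulmxBl -penrose_sym_range //; exact: mpinvP.
have errE w :
    frob2 (step A (S w) (A *m Q *m A) - mpinv A) = frob2 E - sketch_gain E w.
  by rewrite step_subr // frob2_sub_proj_sandwich.
have int_err : P.-integrable setT (EFin \o fun w => frob2 E - sketch_gain E w).
  apply: (bounded_integrable P (M := frob2 E)) => [|w].
    exact/measurable_funB/measurable_sketch_gain.
  rewrite ger0_norm ?subr_ge0 ?sketch_gain_le // gerBl; exact: sketch_gain_ge0.
have int_cst : P.-integrable setT (EFin \o fun=> frob2 E).
  by apply: (bounded_integrable P (M := `|frob2 E|)).
under eq_integral do rewrite errE EFinM.
rewrite integralZl // -(fineK (integrable_fin_num _ int_err)) // -EFinM lee_fin.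
rewrite -/(Rintegral _ _ _) RintegralB //; last exact: integrable_sketch_gain.
rewrite Rintegral_cst_probability ler_wpM2l //.
have := expected_sketch_gain_ge (Q - Q0); rewrite -E_range; lra.
Qed.

End RandomSketch.

Theorem theorem4 (R : realType) (n tau : nat) (A W : 'M[R]_n)
  (d : measure_display) (T : measurableType d) (P : probability T R)
  (S : T -> 'M[R]_(n, tau)) (k : nat) :
  A^T = A ->
  (forall i j, measurable_fun setT (fun w => Zof A (S w) i j)) ->
  (Eiid P k (fun ws => (frob2 (sketch_iter A (A *m W *m A) (map S ws) - mpinv A))%:E)
   <= ((rho P A S) ^+ k * frob2 (A *m W *m A - mpinv A))%:E)%E.
Proof.
move=> A_sym measurable_Z; elim: k W => [|k IH] W /=; first by rewrite mul1r.
pose bound w :=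
  (rho P A S ^+ k * frob2 (step A (S w) (A *m W *m A) - mpinv A))%:E.
apply: le_trans (le_ge0_integral P (g := bound) _ _) _.
- by move=> w; apply: Eiid_ge0 => s; rewrite lee_fin frob2_ge0.
- by move=> w; rewrite /bound; have [Q ->] := step_range A (S w) W; exact: IH.
rewrite exprSr -mulrA; apply: expected_step_error_le => //.
exact/exprn_ge0/rho_ge0.
Qed.
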